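(* Let $n\ge3$ and suppose $T=T_\lambda(r,m)$ acts linearly and inner faithfully on $\Bbbk\overline{Q}$ so that $g$ acts by a reflection: $g\cdot e_i=e_{n-(d+i)}$, $g\cdot a_i=\mu_ia^*_{n-(d+i+1)}$, $g\cdot a_i^*=\mu_i^*a_{n-(d+i+1)}$ for some integer $0<d\le n-1$ and $\mu_i,\mu_i^*\in\Bbbk^\times$. Let $\sigma$ be the quiver-Taft map of the action. (1) If $j$ is a vertex with $g\cdot j=j$, then there exist $c_j,c_j^*\in\Bbbk$ with $$\sigma(a_{j-1})=-c_j^*a_{j-1},\quad \sigma(a_{j-1}^* )=-\mu_j^{-1}\mu^*_{j-1}c_ja_j,\quad \sigma(a_j)=c_ja^*_{j-1},\quad \sigma(a_j^* )=c_j^*a_j^*.$$ (2) If $k$ is a vertex with $g\cdot k=k+1$ and $g\cdot(k+1)=k$, then there exists $c_k\in\Bbbk$ with $\sigma(a_k)=c_ke_k$ and $\sigma(a_k^* )=\lambda\mu_k^*c_ke_{k+1}$; if $c_k\neq0$ then $\lambda^2\mu_k\mu_k^*=1$. (3) If $i$ is neither $j-1$ nor $j$ for any vertex $j$ fixed by $g$, and is not a vertex $k$ as in (2), then $\sigma(a_i)=\sigma(a_i^* )=0$.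
   Context: Let $\Bbbk$ be a field, $r>1$ and $m$ positive integers with $r\mid m$, and $\lambda\in\Bbbk$ a primitive $r$-th root of unity, with $r$ coprime to the characteristic of $\Bbbk$. The generalized Taft algebra $T=T_\lambda(r,m)$ is the Hopf algebra generated by $g,x$ with relations $gx=\lambda xg$, $g^m=1$, $x^r=0$, $\Delta(g)=g\otimes g$, $\Delta(x)=1\otimes x+x\otimes g$, $\varepsilon(g)=1,\varepsilon(x)=0$, $S(g)=g^{-1}$, $S(x)=-xg^{-1}$. An action of $T$ on an algebra $A$ is a $T$-module algebra structure; so $g$ acts by an algebra automorphism and $x\cdot(ab)=a(x\cdot b)+(x\cdot a)(g\cdot b)$. It is inner faithful if no nonzero Hopf ideal $I$ of $T$ satisfies $I\cdot A=0$. Vertex indices are taken modulo $n$. $\overline{Q}$ has vertices $0,\dots,n-1$ and arrows $a_i:i\to i+1$, $a_i^*:i+1\to i$; in $\Bbbk\overline{Q}$, $e_i$ is the trivial path at $i$, $s(a),t(a)$ source and target, and $pq$ is concatenation ($p$ then $q$) if $t(p)=s(q)$, else $0$. A linear action: $g$ acts by a path-length-preserving automorphism ($g\cdot e_i=e_{g\cdot i}$) and $x$ maps vertices into the span of vertices and arrows into the span of vertices and arrows. Then there are scalars $\gamma_i$ with $x\cdot e_i=\gamma_ie_i-\gamma_i\lambda^{-1}e_{g\cdot i}$; the quiver-Taft map $\sigma$ is the linear map on the span of vertices and arrows with $\sigma(e_i)=0$ and $\sigma(a)=x\cdot a-\gamma_{t(a)}a+\gamma_{s(a)}\lambda^{-1}(g\cdot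 a)$ for arrows $a$. (It satisfies $\sigma(a)=e_{s(a)}\sigma(a)e_{g\cdot t(a)}$ and $\sigma(g\cdot a)=\lambda^{-1}g\cdot\sigma(a)$.) *)

From HB Require Import structures.
From mathcomp Require Import all_boot all_order all_algebra.
From mathcomp Require Import finmap.
From mathcomp.multinomials Require Import monalg.
Set Implicit Arguments. Unset Strict Implicit. Unset Printing Implicit Defensive.
Import Order.TTheory GRing.Theory.
Local Open Scope ring_scope.

(* An arrow is a pair (i, b) : 'I_n * bool;                               *)
(*   (i, false) = a_i   : i -> i+1,                                       *)
(*   (i, true)  = a_i^* : i+1 -> i.                                       *)

Definition qarrow (n : nat) := ('I_n * bool)%type.

Definition asrc n (a : qarrow n) : 'I_n := if a.2 then ordS a.1 else a.1.
Definition atgt n (a : qarrow n) : 'I_n := if a.2 then a.1 else ordS a.1.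

Fixpoint validp n (v : 'I_n) (s : seq (qarrow n)) : bool :=
  match s with
  | [::] => true
  | a :: s' => (asrc a == v) && validp (atgt a) s'
  end.

Fixpoint endp n (v : 'I_n) (s : seq (qarrow n)) : 'I_n :=
  match s with
  | [::] => v
  | a :: s' => endp (atgt a) s'
  end.

(* the type of paths of Qbar (trivial paths e_v are (v, [::])) *)
Definition qpath n := {p : 'I_n * seq (qarrow n) | validp p.1 p.2}.

Definition pstart n (p : qpath n) : 'I_n := (val p).1.
Definition pend n (p : qpath n) : 'I_n := endp (val p).1 (val p).2.
Definition plen n (p : qpath n) : nat := size (val p).2.

(* the path algebra k Qbar, as the free k-module on the paths *)
Notation pathalg K n := {malg K[qpath n]}.

Definition triv_path n (v : 'I_n) : qpath n :=
  @exist _ (fun p : 'I_n * seq (qarrow n) => validp p.1 p.2) (v, [::]) isT.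

Lemma arrow_valid n (a : qarrow n) : validp (asrc a) [:: a].
Proof. by rewrite /= eqxx. Qed.

Definition arrow_path n (a : qarrow n) : qpath n :=
  @exist _ (fun p : 'I_n * seq (qarrow n) => validp p.1 p.2) (asrc a, [:: a])
    (arrow_valid a).

Definition evtx (K : fieldType) n (v : 'I_n) : pathalg K n := << triv_path v >>.
Definition earr (K : fieldType) n (a : qarrow n) : pathalg K n := << arrow_path a >>.

Definition pcat (K : fieldType) n (p q : qpath n) : pathalg K n :=
  if pend p == pstart q then
    match insub ((val p).1, (val p).2 ++ (val q).2) : option (qpath n) with
    | Some w => << w >>
    | None => 0
    end
  else 0.

Definition pmul (K : fieldType) n (u v : pathalg K n) : pathalg K n :=
  \sum_(p <- msupp u) \sum_(q <- msupp v) (u@_p * v@_q) *: pcat K p q.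

Definition pone (K : fieldType) n : pathalg K n := \sum_(v : 'I_n) evtx K v.

Definition span_len_le (K : fieldType) n (l : nat) (u : pathalg K n) : Prop :=
  forall p, p \in msupp u -> (plen p <= l)%N.
Definition span_len_eq (K : fieldType) n (l : nat) (u : pathalg K n) : Prop :=
  forall p, p \in msupp u -> plen p = l.

(* The generalized Taft algebra T = T_lambda(r,m), with basis x^a g^b     *)
(* (a < r, b < m); an element is its coefficient function.                *)

Definition taftB (r m : nat) := ('I_r * 'I_m)%type.
Notation taft K r m := {ffun taftB r m -> K}.
Notation taft2 K r m := {ffun (taftB r m * taftB r m) -> K}.

(* structure constant: x^a1 g^b1 * x^a2 g^b2 = lam^(b1 a2) x^(a1+a2) g^(b1+b2)
   (which is 0 when a1 + a2 >= r, since x^r = 0, and uses g^m = 1) *)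
Definition tconst (K : fieldType) (r m : nat) (lam : K) (p1 p2 p : taftB r m) : K :=
  if ((p1.1 + p2.1)%N == p.1) && (((p1.2 + p2.2) %% m)%N == p.2)
  then lam ^+ (p1.2 * p2.1) else 0.

Definition tmul (K : fieldType) r m (lam : K) (u v : taft K r m) : taft K r m :=
  [ffun p : taftB r m => \sum_(p1 : taftB r m) \sum_(p2 : taftB r m)
                u p1 * v p2 * tconst lam p1 p2 p].

Definition tbas (K : fieldType) r m (a b : nat) : taft K r m :=
  [ffun p : taftB r m => if ((p.1 : nat) == a) && ((p.2 : nat) == b) then 1 else 0].

Definition tone (K : fieldType) r m : taft K r m := tbas K r m 0 0.
Definition tg (K : fieldType) r m : taft K r m := tbas K r m 0 1.
Definition tx (K : fieldType) r m : taft K r m := tbas K r m 1 0.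

Definition t2mul (K : fieldType) r m (lam : K) (u v : taft2 K r m) : taft2 K r m :=
  [ffun pq : taftB r m * taftB r m => \sum_(pq1 : taftB r m * taftB r m) \sum_(pq2 : taftB r m * taftB r m)
      u pq1 * v pq2 * tconst lam pq1.1 pq2.1 pq.1 * tconst lam pq1.2 pq2.2 pq.2].

Definition ttens (K : fieldType) r m (u v : taft K r m) : taft2 K r m :=
  [ffun pq : taftB r m * taftB r m => u pq.1 * v pq.2].

(* comultiplication: the algebra map with Delta(g) = g(x)g, Delta(x) = 1(x)x + x(x)g *)
Definition tDelta (K : fieldType) r m (lam : K) (u : taft K r m) : taft2 K r m :=
  let Dx := ttens (tone K r m) (tx K r m) + ttens (tx K r m) (tg K r m) in
  let Dg := ttens (tg K r m) (tg K r m) in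
  let one2 := ttens (tone K r m) (tone K r m) in
  [ffun pq : taftB r m * taftB r m => \sum_(p : taftB r m)
     u p * t2mul lam (iter p.1 (t2mul lam Dx) one2) (iter p.2 (t2mul lam Dg) one2) pq].

Definition teps (K : fieldType) r m (u : taft K r m) : K :=
  \sum_(p : taftB r m) (if (p.1 : nat) == 0%N then u p else 0).

(* antipode: the anti-algebra map with S(g) = g^-1 = g^(m-1), S(x) = - x g^-1,
   so S(x^a g^b) = S(g)^b S(x)^a *)
Definition tS (K : fieldType) r m (lam : K) (u : taft K r m) : taft K r m :=
  let Sg := tbas K r m 0 (m.-1) in
  let Sx := - tbas K r m 1 (m.-1) in
  [ffun q : taftB r m => \sum_(p : taftB r m)
     u p * tmul lam (iter p.2 (tmul lam Sg) (tone K r m))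
                    (iter p.1 (tmul lam Sx) (tone K r m)) q].

Definition tscale (K : fieldType) r m (c : K) (u : taft K r m) : taft K r m :=
  [ffun p : taftB r m => c * u p].

Definition taft_hopf_ideal (K : fieldType) r m (lam : K) (I : taft K r m -> Prop) : Prop :=
  [/\ I 0,
      (forall u v, I u -> I v -> I (u + v)),
      (forall (c : K) u, I u -> I (tscale c u)),
      (forall t u, I u -> I (tmul lam t u) /\ I (tmul lam u t))
    & [/\ (forall u, I u -> teps u = 0),
      (forall u, I u -> exists (s1 s2 : seq (taft K r m * taft K r m)),
          (forall pq, pq \in s1 -> I pq.1) /\
          (forall pq, pq \in s2 -> I pq.2) /\
          tDelta lam u = \sum_(pq <- s1) ttens pq.1 pq.2 + \sum_(pq <- s2) ttens pq.1 pq.2)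
    & (forall u, I u -> I (tS lam u))]].

(* Actions of T on k Qbar.  A T-module structure is given by the operators *)
(* G (action of g) and X (action of x) subject to the defining relations  *)
(* of T; the element sum c_{a,b} x^a g^b acts by sum c_{a,b} X^a G^b.      *)

Definition taft_act (K : fieldType) n r m (G X : pathalg K n -> pathalg K n)
  (u : taft K r m) (w : pathalg K n) : pathalg K n :=
  \sum_(p : taftB r m) u p *: iter p.1 X (iter p.2 G w).

Definition taft_module_algebra (K : fieldType) n r m (lam : K)
  (G X : pathalg K n -> pathalg K n) : Prop :=
  [/\
      (forall (c : K) u v, G (c *: u + v) = c *: G u + G v),
      (forall (c : K) u v, X (c *: u + v) = c *: X u + X v),
      (forall u, G (X u) = lam *: X (G u)),
      (forall u, iter m G u = u)
    & [/\ (forall u, iter r X u = 0),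
      (forall u v, G (pmul u v) = pmul (G u) (G v)) /\ G (pone K n) = pone K n,
      (forall u v, X (pmul u v) = pmul u (X v) + pmul (X u) (G v))
    & X (pone K n) = 0]].

Definition taft_linear_action (K : fieldType) n (G X : pathalg K n -> pathalg K n) : Prop :=
  [/\ bijective G,
      (forall p : qpath n, span_len_eq (plen p) (G << p >>)),
      (forall v : 'I_n, span_len_le 0 (X (evtx K v)))
    & (forall a : qarrow n, span_len_le 1 (X (earr K a)))].

Definition inner_faithful (K : fieldType) n r m (lam : K)
  (G X : pathalg K n -> pathalg K n) : Prop :=
  forall I : taft K r m -> Prop, taft_hopf_ideal lam I ->
    (forall u w, I u -> taft_act G X u w = 0) -> forall u, I u -> u = 0.

Definition quiver_taft (K : fieldType) n (lam : K) (gam : 'I_n -> K)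
  (G X : pathalg K n -> pathalg K n) (a : qarrow n) : pathalg K n :=
  X (earr K a) - gam (atgt a) *: earr K a + (gam (asrc a) * lam^-1) *: G (earr K a).

Definition refl_vtx (n d : nat) (i : nat) : nat := ((2 * n) - (d + i)) %% n.

(* Applying x to e_{s(a)} a and to a e_{t(a)} shows that the quiver-Taft map satisfies
   sigma(a) = e_{s(a)} sigma(a) e_{g.t(a)}; as it also lies in the span of vertices and
   arrows, sigma(a) is a multiple of the unique path of length <= 1 from s(a) to g.t(a),
   and vanishes if there is none.  From gx = lam xg and gamma_{g.i} = lam^-1 gamma_i one
   gets sigma(g.a) = lam^-1 g.sigma(a).  Since g is an involution on arrows, the two
   scalars c, c' attached to a and g.a then satisfy c' = lam^-1 c and c = lam^-1 c', which
   forces c = -c' because lam <> 1.  For a reflection, a short path from s(a) to g.t(a)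
   exists only next to a fixed vertex or on an edge whose ends are swapped. *)

From HB Require Import structures.
From mathcomp Require Import all_boot all_order all_algebra.
From mathcomp Require Import finmap.
From mathcomp.multinomials Require Import monalg.
From mathcomp Require Import zify ring.
Set Implicit Arguments. Unset Strict Implicit. Unset Printing Implicit Defensive.
Import GRing.Theory.
Local Open Scope ring_scope.

Section PathAlgebra.
Variables (K : fieldType) (n : nat).
Implicit Types (u : pathalg K n) (p q w : qpath n) (v : 'I_n).

Lemma pmulEw u u' (D1 D2 : {fset qpath n}) :
  (msupp u `<=` D1)%fset -> (msupp u' `<=` D2)%fset ->
  pmul u u' = \sum_(p <- D1) \sum_(q <- D2) (u@_p * u'@_q) *: pcat K p q.
Proof.
move=> le1 le2; rewrite /pmul (big_fset_incl _ le1) /=.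
  apply/eq_bigr=> p _; apply/big_fset_incl => // q _ /mcoeff_outdom ->.
  by rewrite mulr0 scale0r.
move=> p _ /mcoeff_outdom ->.
by rewrite big1 => // q _; rewrite mul0r scale0r.
Qed.

Lemma pmul_is_bilinear : bilinear_for *:%R *:%R (@pmul K n).
Proof.
have cover c (u1 u2 : pathalg K n) :
    {D : {fset qpath n} |
      [/\ msupp u1 `<=` D, msupp u2 `<=` D & msupp (c *: u1 + u2) `<=` D]%fset}.
  exists (msupp u1 `|` msupp u2 `|` msupp (c *: u1 + u2))%fset.
  by split; apply/fsubsetP => x hx; rewrite !inE hx ?orbT.
split=> [u'|u] c u1 u2 /=; have [D [le1 le2 le3]] := cover c u1 u2.
- rewrite (pmulEw le3 (fsubset_refl _)) (pmulEw le1 (fsubset_refl _)).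
  rewrite (pmulEw le2 (fsubset_refl _)) scaler_sumr -big_split; apply: eq_bigr => p _.
  rewrite scaler_sumr -big_split; apply: eq_bigr => q _ /=.
  by rewrite mcoeffD mcoeffZ scalerA -scalerDl mulrDl mulrA.
- rewrite (pmulEw (fsubset_refl _) le3) (pmulEw (fsubset_refl _) le1).
  rewrite (pmulEw (fsubset_refl _) le2) scaler_sumr -big_split; apply: eq_bigr => p _.
  rewrite scaler_sumr -big_split; apply: eq_bigr => q _ /=.
  by rewrite mcoeffD mcoeffZ scalerA -scalerDl mulrDr mulrCA.
Qed.

Lemma mcoeff_is_scalar w : scalar (fun u : pathalg K n => u@_w).
Proof. by move=> c u u'; rewrite mcoeffD mcoeffZ. Qed.

Lemma mcoeff_path p w : (<< p >> : pathalg K n)@_w = (p == w)%:R.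
Proof. exact: mcoeffU. Qed.

Lemma msupp_path p : msupp (<< p >> : pathalg K n) = [fset p]%fset.
Proof. by rewrite msuppU oner_eq0. Qed.

Lemma pmulUr u q : pmul u << q >> = \sum_(p <- msupp u) u@_p *: pcat K p q.
Proof.
by apply: eq_bigr => p _; rewrite msupp_path big_seq_fset1 mcoeff_path eqxx mulr1.
Qed.

Lemma pmulUl p u : pmul << p >> u = \sum_(q <- msupp u) u@_q *: pcat K p q.
Proof.
by rewrite /pmul msupp_path big_seq_fset1 mcoeff_path eqxx; apply: eq_bigr => q _; rewrite mul1r.
Qed.

Lemma pcat_trivr p v : pcat K p (triv_path v) = if pend p == v then << p >> else 0.
Proof.
rewrite /pcat /=; case: ifP => // _.
by rewrite cats0 -surjective_pairing valK.
Qed.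

Lemma pcat_trivl p v : pcat K (triv_path v) p = if v == pstart p then << p >> else 0.
Proof.
rewrite /pcat; case: eqP => // vp; rewrite cat0s [v]vp.
by rewrite /pstart /= -surjective_pairing valK.
Qed.

Lemma mcoeff_sumZU (D : {fset qpath n}) (F : qpath n -> K) w :
  (\sum_(p <- D) F p *: << p >>)@_w = if w \in D then F w else 0.
Proof.
rewrite raddf_sum /=; under eq_bigr => p _ do rewrite mcoeffZ mcoeff_path mulr_natr mulrb.
rewrite -big_mkcond; case: ifP => wD; first exact: (fbig_pred1_inj _ _ wD (@inj_id _)).
by rewrite big_seq_cond big1 // => p /andP[pD /eqP pw]; rewrite pw wD in pD.
Qed.

Lemma mcoeff_pmul_evtxr u v w :
  (pmul u (evtx K v))@_w = if pend w == v then u@_w else 0.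
Proof.
have -> : pmul u (evtx K v) = \sum_(p <- msupp u) (if pend p == v then u@_p else 0) *: << p >>.
  rewrite pmulUr; apply: eq_bigr => p _.
  by rewrite pcat_trivr; case: ifP; rewrite ?scaler0 ?scale0r.
rewrite (mcoeff_sumZU _ (fun p => if pend p == v then u@_p else 0)).
by case: ifP => // /negbT /mcoeff_outdom ->; rewrite if_same.
Qed.

Lemma mcoeff_pmul_evtxl u v w :
  (pmul (evtx K v) u)@_w = if pstart w == v then u@_w else 0.
Proof.
have -> : pmul (evtx K v) u = \sum_(q <- msupp u) (if pstart q == v then u@_q else 0) *: << q >>.
  rewrite pmulUl; apply: eq_bigr => q _.
  by rewrite pcat_trivl eq_sym; case: ifP; rewrite ?scaler0 ?scale0r.
rewrite (mcoeff_sumZU _ (fun q => if pstart q == v then u@_q else 0)).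
by case: ifP => // /negbT /mcoeff_outdom ->; rewrite if_same.
Qed.

End PathAlgebra.

Lemma ordS_neq n (i : 'I_n) : (1 < n)%N -> ordS i != i.
Proof.
move=> n_gt1; apply/eqP => /(congr1 val) /= /eqP.
rewrite -[X in _ == X](modn_small (ltn_ord i)) -addn1 -{2}[val i]addn0 eqn_modDl.
by rewrite mod0n modn_small.
Qed.

Lemma ordSS_neq n (i : 'I_n) : (2 < n)%N -> ordS (ordS i) != i.
Proof.
move=> n_gt2; apply/eqP => /(congr1 val) /= /eqP.
rewrite -addn1 modnDml -addn1 -addnA -[X in _ == X](modn_small (ltn_ord i)).
by rewrite -{2}[val i]addn0 eqn_modDl mod0n modn_small.
Qed.

Section ShortPaths.
Variable n : nat.
Implicit Types (w : qpath n) (s t : 'I_n).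

Lemma triv_path_inj : injective (@triv_path n).
Proof. by move=> i j /(congr1 (@pstart n)). Qed.

Lemma short_pathP w s t : (plen w <= 1)%N -> pstart w = s -> pend w = t ->
  [\/ w = triv_path s /\ t = s, w = arrow_path (s, false) /\ t = ordS s
    | w = arrow_path (t, true) /\ s = ordS t].
Proof.
case: w => [[v [|[i b] [|? ?]]] valid]; rewrite /plen /pstart /pend //= => _ <- <-.
  by apply: Or31; split => //; apply: val_inj.
have /andP[/eqP vi _] := valid.
by case: b vi valid => /= <- valid; [apply: Or33 | apply: Or32]; split => //; apply: val_inj.
Qed.

Lemma short_path_loop w s : (1 < n)%N -> (plen w <= 1)%N ->
  pstart w = s -> pend w = s -> w = triv_path s.
Proof.
move=> n_gt1 short ws we.
case: (short_pathP short ws we) => [[]|[_ sS]|[_ sS]] //.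
all: by move/eqP: (ordS_neq s n_gt1); rewrite -sS.
Qed.

Lemma short_path_fwd w s : (2 < n)%N -> (plen w <= 1)%N ->
  pstart w = s -> pend w = ordS s -> w = arrow_path (s, false).
Proof.
move=> n_gt2 short ws we; have n_gt1 : (1 < n)%N by apply: ltnW.
case: (short_pathP short ws we) => [[_ sS]|[]|[_ sSS]] //.
  by move/eqP: (ordS_neq s n_gt1); rewrite sS.
by move/eqP: (ordSS_neq s n_gt2); rewrite -sSS.
Qed.

Lemma short_path_bwd w t : (2 < n)%N -> (plen w <= 1)%N ->
  pstart w = ordS t -> pend w = t -> w = arrow_path (t, true).
Proof.
move=> n_gt2 short ws we; have n_gt1 : (1 < n)%N by apply: ltnW.
case: (short_pathP short ws we) => [[_ tS]|[_ tSS]|[]] //.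
  by move/eqP: (ordS_neq t n_gt1); rewrite -tS.
by move/eqP: (ordSS_neq t n_gt2); rewrite -tSS.
Qed.

End ShortPaths.

Section ReflectionOrd.
Local Open Scope nat_scope.
Variables (n d : nat).
Hypothesis d_lt_n : d < n.

Let n_gt0 : 0 < n := leq_ltn_trans (leq0n d) d_lt_n.

Definition refl_ord (i : 'I_n) : 'I_n := Ordinal (ltn_pmod (2 * n - (d + i)) n_gt0).

Lemma eq_refl_ord (i j : 'I_n) : (j == refl_ord i) = (d + i + j == 0 %[mod n]).
Proof.
have sum2n : d + i + (2 * n - (d + i)) = 2 * n by rewrite subnKC //; have := ltn_ord i; lia.
by rewrite -(modnMl 2 n) modn_mod -sum2n eqn_modDl -val_eqE /= (modn_small (ltn_ord j)).
Qed.

Lemma refl_ordK : involutive refl_ord.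
Proof. by move=> i; apply/esym/eqP; rewrite eq_refl_ord addnAC -eq_refl_ord. Qed.

Lemma ordS_refl_ordS i : ordS (refl_ord (ordS i)) = refl_ord i.
Proof.
have := eqxx (refl_ord (ordS i)); set r := refl_ord (ordS i).
rewrite {1}eq_refl_ord -[nat_of_ord (ordS i)]/(i.+1 %% n) [d + _]addnC -addnA modnDml.
move=> fixS; apply/eqP; rewrite eq_refl_ord -[nat_of_ord (ordS r)]/(r.+1 %% n) modnDmr.
by rewrite (_ : d + i + r.+1 = i.+1 + (d + r)) //; lia.
Qed.

Lemma refl_ordS i : refl_ord (ordS i) = ord_pred (refl_ord i).
Proof. by rewrite -(ordS_refl_ordS i) ordSK. Qed.

Lemma refl_ordS_val i : refl_ord (ordS i) = (2 * n - (d + i + 1)) %% n :> nat.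
Proof.
have lt_n : (2 * n - (d + i + 1)) %% n < n := ltn_pmod _ n_gt0.
apply/eqP; rewrite -[_ == _]/(refl_ord (ordS i) == Ordinal lt_n) eq_sym eq_refl_ord.
rewrite -[nat_of_ord (ordS i)]/(i.+1 %% n) /= modnDmr [d + _]addnC -addnA modnDml.
by rewrite (_ : i.+1 + _ = 2 * n) ?modnMl ?mod0n //; have := ltn_ord i; lia.
Qed.
End ReflectionOrd.

Lemma prim_root_neq1 (R : nzRingType) (r : nat) (z : R) :
  (1 < r)%N -> r.-primitive_root z -> z != 1.
Proof.
by move=> r_gt1 prim; rewrite -[z]expr1 -(prim_order_dvd prim) dvdn1 neq_ltn r_gt1 orbT.
Qed.

Lemma eqN_of_swap (K : fieldType) (l x y : K) :
  l != 1 -> x = l * y -> y = l * x -> x = - y.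
Proof.
move=> l_neq1 xy yx; have : x * ((1 - l) * (1 + l)) = 0.
  have -> : x * ((1 - l) * (1 + l)) = x - l * (l * x) by ring.
  by rewrite -yx -xy subrr.
move/eqP; rewrite !mulf_eq0 subr_eq0 [1 == l]eq_sym (negbTE l_neq1) /= => /orP[/eqP x0|].
  by rewrite yx x0 mulr0 oppr0.
by rewrite addrC addr_eq0 => /eqP l_N1; rewrite xy l_N1 mulN1r.
Qed.

(* Only these properties of the path algebra are used below: coordinates [coef w] along
   the basis of paths, and the effect on them of multiplying by a vertex.  Stating them
   for an abstract module [V] also keeps conversion away from the finite-support
   representation of [{malg}], on which failed unifications are extremely slow. *)
Section PathModel.
Variables (K : fieldType) (n : nat) (V : lmodType K).
Variables (coef : qpath n -> V -> K) (B : qpath n -> V) (mul : V -> V -> V).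
Hypothesis coef_scalar : forall w, scalar (coef w).
Hypothesis coef_basis : forall p w, coef w (B p) = (p == w)%:R.
Hypothesis coef_inj : forall u v, (forall w, coef w u = coef w v) -> u = v.
Hypothesis mul_bilinear : bilinear_for *:%R *:%R mul.
Hypothesis coef_mul_vtxr : forall u v w,
  coef w (mul u (B (triv_path v))) = if pend w == v then coef w u else 0.
Hypothesis coef_mul_vtxl : forall u v w,
  coef w (mul (B (triv_path v)) u) = if pstart w == v then coef w u else 0.

HB.instance Definition _ := bilinear_isBilinear.Build K V V V *:%R *:%R mul mul_bilinear.

Let coefZ w c u : coef w (c *: u) = c * coef w u.
Proof. exact: (scalable_linear (coef_scalar w)). Qed.
Let coefB w : {morph coef w : u v / u - v}.
Proof. exact: (zmod_morphism_linear (coef_scalar w)). Qed.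
Let coefD w : {morph coef w : u v / u + v}.
Proof. by move=> u v; have := coef_scalar w 1 u v; rewrite scale1r mul1r. Qed.
Let coef0 w : coef w 0 = 0.
Proof. by rewrite -[0 in LHS](subrr 0) coefB subrr. Qed.
Let coefN w u : coef w (- u) = - coef w u.
Proof. by rewrite -sub0r coefB coef0 sub0r. Qed.

Local Notation vtx v := (B (triv_path v)).
Local Notation arr a := (B (arrow_path a)).

Lemma coef_supp1 u w0 : (forall w, coef w u != 0 -> w = w0) -> u = coef w0 u *: B w0.
Proof.
move=> supp1; apply: coef_inj => w; rewrite coefZ coef_basis.
have [<-|ne] := eqVneq w0 w; first by rewrite mulr1.
by rewrite mulr0; apply/eqP; apply: contraNT ne => /supp1 ->.
Qed.

Lemma scale_basis_inj p c d : c *: B p = d *: B p -> c = d.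
Proof. by move/(congr1 (coef p)); rewrite !coefZ coef_basis eqxx !mulr1. Qed.

Lemma mul_arr_vtx a v : mul (arr a) (vtx v) = if atgt a == v then arr a else 0.
Proof.
apply: coef_inj => w; rewrite coef_mul_vtxr coef_basis.
case: (boolP (atgt a == v)) => [/eqP tv|tv]; rewrite ?coef0 ?coef_basis; case: eqP => // pw.
  by case: eqP => // aw; case: pw; rewrite -aw.
by case: eqP => // aw; move: tv; rewrite -pw -aw eqxx.
Qed.

Lemma mul_vtx_arr a v : mul (vtx v) (arr a) = if asrc a == v then arr a else 0.
Proof.
apply: coef_inj => w; rewrite coef_mul_vtxl coef_basis.
case: (boolP (asrc a == v)) => [/eqP sv|sv]; rewrite ?coef0 ?coef_basis; case: eqP => // pw.
  by case: eqP => // aw; case: pw; rewrite -aw.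
by case: eqP => // aw; move: sv; rewrite -pw -aw eqxx.
Qed.

Section QuiverTaftMap.
Variables (lam : K) (G X : V -> V) (gam : 'I_n -> K) (gv : 'I_n -> 'I_n).
Hypotheses (lam_neq0 : lam != 0) (lam_neq1 : lam != 1).
Hypotheses (G_linear : linear G) (X_linear : linear X).
Hypothesis GX : forall u, G (X u) = lam *: X (G u).
Hypothesis G_mul : forall u v, G (mul u v) = mul (G u) (G v).
Hypothesis X_mul : forall u v, X (mul u v) = mul u (X v) + mul (X u) (G v).
Hypothesis gvK : involutive gv.
Hypothesis G_vtx : forall i, G (vtx i) = vtx (gv i).
Hypothesis X_vtx : forall i, X (vtx i) = gam i *: vtx i - (gam i * lam^-1) *: vtx (gv i).
Hypothesis G_len : forall p w, coef w (G (B p)) != 0 -> plen w = plen p.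
Hypothesis X_arr_len : forall a w, coef w (X (arr a)) != 0 -> (plen w <= 1)%N.

Let GZ c u : G (c *: u) = c *: G u. Proof. exact: (scalable_linear G_linear). Qed.
Let GB : {morph G : u v / u - v}. Proof. exact: (zmod_morphism_linear G_linear). Qed.
Let GD : {morph G : u v / u + v}.
Proof. by move=> u v; have := G_linear 1 u v; rewrite !scale1r. Qed.
Let XZ c u : X (c *: u) = c *: X u. Proof. exact: (scalable_linear X_linear). Qed.

Local Notation sigma a :=
  (X (arr a) - gam (atgt a) *: arr a + (gam (asrc a) * lam^-1) *: G (arr a)).

Lemma gam_fixed i : gv i = i -> gam i = 0.
Proof.
move=> gi; have := GX (vtx i); rewrite X_vtx GB !GZ !G_vtx gi X_vtx gi.
move/(congr1 (coef (triv_path i))).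
rewrite coefZ !coefB !coefZ coef_basis eqxx !mulr1 => e.
have : gam i * ((1 - lam) * (1 - lam^-1)) = 0.
  rewrite (_ : _ * _ = gam i - gam i * lam^-1 - lam * (gam i - gam i * lam^-1)).
    by rewrite -e subrr.
  by field.
move/eqP; rewrite !mulf_eq0 !subr_eq0 ![1 == _]eq_sym invr_eq1 (negbTE lam_neq1) !orbF.
exact: eqP.
Qed.

Lemma gam_gv i : gam (gv i) = lam^-1 * gam i.
Proof.
have [gi|gi] := eqVneq (gv i) i; first by rewrite gi gam_fixed // mulr0.
have := GX (vtx i); rewrite X_vtx GB !GZ !G_vtx X_vtx gvK.
move/(congr1 (coef (triv_path (gv i)))); rewrite coefZ !coefB !coefZ !coef_basis eqxx.
have /negbTE -> : triv_path i != triv_path (gv i).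
  by rewrite (inj_eq (@triv_path_inj n)) eq_sym.
by rewrite !mulr0 !subr0 !mulr1 => ->; rewrite mulrA mulVf ?mul1r.
Qed.

Lemma sigma_vtxl a :
  sigma a = mul (vtx (asrc a))
                (X (arr a) + gam (asrc a) *: G (arr a) - gam (atgt a) *: arr a).
Proof.
have e_a : mul (vtx (asrc a)) (arr a) = arr a by rewrite mul_vtx_arr eqxx.
have e_Ga : mul (vtx (gv (asrc a))) (G (arr a)) = G (arr a) by rewrite -G_vtx -G_mul e_a.
have := X_mul (vtx (asrc a)) (arr a).
rewrite e_a X_vtx linearBl !linearZl_LR /= e_Ga => eX.
rewrite linearBr linearDr !linearZr_LR /= e_a {1}eX.
by apply: coef_inj => w; rewrite !(coefB, coefD, coefN, coefZ); ring.
Qed.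

Lemma sigma_vtxr a :
  sigma a = mul (X (arr a) - (gam (atgt a) * lam^-1) *: arr a
                 + (gam (asrc a) * lam^-1) *: G (arr a)) (vtx (gv (atgt a))).
Proof.
have a_e : mul (arr a) (vtx (atgt a)) = arr a by rewrite mul_arr_vtx eqxx.
have Ga_e : mul (G (arr a)) (vtx (gv (atgt a))) = G (arr a) by rewrite -G_vtx -G_mul a_e.
have := X_mul (arr a) (vtx (atgt a)).
rewrite a_e X_vtx linearBr !linearZr_LR /= a_e G_vtx => eX.
rewrite linearDl linearBl !linearZl_LR /= Ga_e {1}eX.
by apply: coef_inj => w; rewrite !(coefB, coefD, coefN, coefZ); ring.
Qed.

Lemma sigma_supp a w : coef w (sigma a) != 0 ->
  [/\ pstart w = asrc a, pend w = gv (atgt a) & (plen w <= 1)%N].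
Proof.
move=> nz; split.
- by apply/eqP; apply: contraNT nz => ne; rewrite sigma_vtxl coef_mul_vtxl (negbTE ne).
- by apply/eqP; apply: contraNT nz => ne; rewrite sigma_vtxr coef_mul_vtxr (negbTE ne).
apply: contraNT nz; rewrite -ltnNge => long.
have coefX : coef w (X (arr a)) = 0.
  by apply/eqP; apply: contraTT long => /X_arr_len; rewrite -leqNgt.
have coefG : coef w (G (arr a)) = 0 by apply/eqP; apply: contraTT long => /G_len ->.
have coefA : coef w (arr a) = 0 by rewrite coef_basis; case: eqP long => // <-.
by rewrite coefD coefB !coefZ coefX coefG coefA !mulr0 subr0 addr0.
Qed.

Lemma sigma_on_path a w0 :
  (forall w, (plen w <= 1)%N -> pstart w = asrc a -> pend w = gv (atgt a) -> w = w0) ->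
  sigma a = coef w0 (sigma a) *: B w0.
Proof. by move=> only_w0; apply: coef_supp1 => w /sigma_supp[ws we wl]; exact: only_w0. Qed.

Lemma sigma_eq0 a :
  (forall w, (plen w <= 1)%N -> pstart w = asrc a -> pend w = gv (atgt a) -> False) ->
  sigma a = 0.
Proof.
move=> no_path; apply: coef_inj => w; rewrite coef0; apply/eqP; apply: contraT.
by case/sigma_supp => ws we wl; case: (no_path w wl ws we).
Qed.

Lemma sigma_G a b mu : G (arr a) = mu *: arr b -> asrc b = gv (asrc a) ->
  atgt b = gv (atgt a) -> mu *: sigma b = lam^-1 *: G (sigma a).
Proof.
move=> Ga sb tb.
have XGa : lam^-1 *: G (X (arr a)) = mu *: X (arr b).
  by rewrite GX scalerA mulVf // scale1r Ga XZ.
have GGa : G (G (arr a)) = mu *: G (arr b) by rewrite Ga GZ.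
rewrite sb tb !gam_gv GD GB !GZ GGa Ga; apply: coef_inj => w.
have := congr1 (coef w) XGa; rewrite !(coefB, coefD, coefN, coefZ) => cXGa.
by rewrite [in RHS]mulrDr [in RHS]mulrBr cXGa; ring.
Qed.

Section Reflection.
Variables (mu mus : 'I_n -> K).
Hypothesis n_gt2 : (2 < n)%N.
Hypothesis gv_ordS : forall i, gv (ordS i) = ord_pred (gv i).
Hypotheses (mu_neq0 : forall i, mu i != 0) (mus_neq0 : forall i, mus i != 0).

Definition refl_arrow (a : qarrow n) : qarrow n := (gv (ordS a.1), ~~ a.2).
Definition refl_coef (a : qarrow n) : K := if a.2 then mus a.1 else mu a.1.

Hypothesis G_arr : forall a, G (arr a) = refl_coef a *: arr (refl_arrow a).

Lemma gv_ord_pred i : gv (ord_pred i) = ordS (gv i).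
Proof. by rewrite -{2}(ord_predK i) gv_ordS ord_predK. Qed.

Lemma asrc_refl_arrow a : asrc (refl_arrow a) = gv (asrc a).
Proof.
case: a => i []; first by [].
by change (ordS (gv (ordS i)) = gv i); rewrite gv_ordS ord_predK.
Qed.

Lemma atgt_refl_arrow a : atgt (refl_arrow a) = gv (atgt a).
Proof.
case: a => i []; last by [].
by change (ordS (gv (ordS i)) = gv i); rewrite gv_ordS ord_predK.
Qed.

Lemma refl_arrowK : involutive refl_arrow.
Proof.
case=> i b; change ((gv (ordS (gv (ordS i))), ~~ ~~ b) = (i, b)).
by rewrite [gv (ordS i)]gv_ordS ord_predK gvK negbK.
Qed.

Lemma refl_coef_neq0 a : refl_coef a != 0.
Proof. by case: a => i []; [exact: mus_neq0 | exact: mu_neq0]. Qed.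

Lemma sigma_loop a v : asrc a = v -> gv (atgt a) = v ->
  sigma a = coef (triv_path v) (sigma a) *: vtx v.
Proof.
move=> sa ta; apply: sigma_on_path => w wl ws we.
by apply: (short_path_loop (ltnW n_gt2)); rewrite ?ws ?we ?sa ?ta.
Qed.

Lemma sigma_fwd a s : asrc a = s -> gv (atgt a) = ordS s ->
  sigma a = coef (arrow_path (s, false)) (sigma a) *: arr (s, false).
Proof.
move=> sa ta; apply: sigma_on_path => w wl ws we.
by apply: (short_path_fwd n_gt2); rewrite ?ws ?we ?sa ?ta.
Qed.

Lemma sigma_bwd a t : asrc a = ordS t -> gv (atgt a) = t ->
  sigma a = coef (arrow_path (t, true)) (sigma a) *: arr (t, true).
Proof.
move=> sa ta; apply: sigma_on_path => w wl ws we.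
by apply: (short_path_bwd n_gt2); rewrite ?ws ?we ?sa ?ta.
Qed.

Lemma sigma_refl a : refl_coef a *: sigma (refl_arrow a) = lam^-1 *: G (sigma a).
Proof. exact: sigma_G (G_arr a) (asrc_refl_arrow a) (atgt_refl_arrow a). Qed.

Lemma sigma_refl_arr a b c : sigma a = c *: arr b ->
  refl_coef a *: sigma (refl_arrow a) = (lam^-1 * c * refl_coef b) *: arr (refl_arrow b).
Proof. by move=> sa; rewrite sigma_refl sa GZ G_arr !scalerA ?mulrA. Qed.

Lemma sigma_refl_vtx a v c : sigma a = c *: vtx v ->
  refl_coef a *: sigma (refl_arrow a) = (lam^-1 * c) *: vtx (gv v).
Proof. by move=> sa; rewrite sigma_refl sa GZ G_vtx scalerA. Qed.

Lemma sigma_refl_diag a ca cb : sigma a = ca *: arr a ->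
  sigma (refl_arrow a) = cb *: arr (refl_arrow a) -> ca = - cb.
Proof.
move=> sa sb; have linv_neq1 : lam^-1 != 1 by rewrite invr_eq1.
have e1 := sigma_refl_arr sa; rewrite sb scalerA in e1.
have e2 := sigma_refl_arr sb; rewrite refl_arrowK sa scalerA in e2.
apply: (eqN_of_swap linv_neq1).
- by apply: (mulfI (refl_coef_neq0 (refl_arrow a))); rewrite (scale_basis_inj e2) mulrC.
- by apply: (mulfI (refl_coef_neq0 a)); rewrite (scale_basis_inj e1) mulrC.
Qed.

Lemma sigma_refl_swap a ca cb : sigma a = ca *: arr (refl_arrow a) ->
  sigma (refl_arrow a) = cb *: arr a -> refl_coef a * cb = - (refl_coef (refl_arrow a) * ca).
Proof.
move=> sa sb; have linv_neq1 : lam^-1 != 1 by rewrite invr_eq1.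
have e1 := sigma_refl_arr sa; rewrite refl_arrowK sb scalerA in e1.
have e2 := sigma_refl_arr sb; rewrite refl_arrowK sa scalerA in e2.
apply: (eqN_of_swap linv_neq1).
- by rewrite (scale_basis_inj e1) -mulrA [ca * _]mulrC.
- by rewrite (scale_basis_inj e2) -mulrA [cb * _]mulrC.
Qed.

Lemma sigma_fixed_vertex j : gv j = j ->
  exists c cs : K,
    [/\ sigma (ord_pred j, false) = - cs *: arr (ord_pred j, false),
        sigma (ord_pred j, true) = - ((mu j)^-1 * mus (ord_pred j) * c) *: arr (j, false),
        sigma (j, false) = c *: arr (ord_pred j, true)
      & sigma (j, true) = cs *: arr (j, true)].
Proof.
move=> gj; set p := ord_pred j; have Sp : ordS p = j := ord_predK j.
have gp : gv p = ordS j by rewrite gv_ord_pred gj.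
have gSj : gv (ordS j) = p by rewrite -gp gvK.
have gSp : gv (ordS p) = ordS p by rewrite Sp gj.
have rp : refl_arrow (p, false) = (j, true) by rewrite /refl_arrow Sp gj.
have rj : refl_arrow (j, false) = (p, true) by rewrite /refl_arrow gSj.
have s1 := sigma_fwd (a := (p, false)) (erefl p) gSp.
have s2 := sigma_fwd (a := (p, true)) Sp gp.
have s3 := sigma_bwd (a := (j, false)) (esym Sp) gSj.
have s4 := sigma_bwd (a := (j, true)) (erefl (ordS j)) gj.
set c1 := coef _ _ in s1; set c2 := coef _ _ in s2.
set c3 := coef _ _ in s3; set c4 := coef _ _ in s4.
have e14 : c1 = - c4 by apply: (sigma_refl_diag s1); rewrite rp.
have e23 : refl_coef (j, false) * c2 = - (refl_coef (refl_arrow (j, false)) * c3).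
  by apply: sigma_refl_swap; rewrite rj.
have {}e23 : c2 = - ((mu j)^-1 * mus p * c3).
  by apply: (mulfI (mu_neq0 j)); rewrite [LHS]e23 rj mulrN !mulrA mulfV ?mul1r.
by exists c3, c4; split; rewrite ?s1 ?s2 ?e14 ?e23.
Qed.

Lemma sigma_swapped_edge k : gv k = ordS k -> gv (ordS k) = k ->
  exists c : K,
    [/\ sigma (k, false) = c *: vtx k,
        sigma (k, true) = (lam * mus k * c) *: vtx (ordS k)
      & c != 0 -> lam ^+ 2 * mu k * mus k = 1].
Proof.
move=> gk gSk.
have sF := sigma_loop (a := (k, false)) (erefl k) gSk.
have sT := sigma_loop (a := (k, true)) (erefl (ordS k)) gk.
set c := coef _ _ in sF; set c' := coef _ _ in sT.
have rF : refl_arrow (k, false) = (k, true) by rewrite /refl_arrow gSk.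
have rT : refl_arrow (k, true) = (k, false) by rewrite /refl_arrow gSk.
have e1 := sigma_refl_vtx sF; rewrite rF sT gk scalerA in e1.
have e2 := sigma_refl_vtx sT; rewrite rT sF gSk scalerA in e2.
have {e1}e1 : mu k * c' = lam^-1 * c := scale_basis_inj e1.
have {e2}e2 : mus k * c = lam^-1 * c' := scale_basis_inj e2.
have c'E : c' = lam * mus k * c by rewrite -mulrA e2 mulrA mulfV ?mul1r.
exists c; split => // [|c_neq0]; first by rewrite sT c'E.
have : (lam ^+ 2 * mu k * mus k - 1) * c = lam * (mu k * c' - lam^-1 * c).
  by rewrite c'E; field.
rewrite e1 subrr mulr0 => /eqP; rewrite mulf_eq0 (negbTE c_neq0) orbF subr_eq0.
exact: eqP.
Qed.

Lemma sigma_elsewhere i :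
  (forall j, gv j = j -> i <> ord_pred j /\ i <> j) ->
  ~ (gv i = ordS i /\ gv (ordS i) = i) ->
  sigma (i, false) = 0 /\ sigma (i, true) = 0.
Proof.
move=> not_near_fixed not_swapped.
have not_fixed : gv i = i -> False by move=> gi; case: (not_near_fixed i gi) => _; apply.
have not_fixedS : gv (ordS i) = ordS i -> False.
  by move=> gSi; case: (not_near_fixed _ gSi); rewrite ordSK.
split; apply: sigma_eq0 => w wl ws we.
- case: (short_pathP (s := i) (t := gv (ordS i)) wl ws we) => -[_ e].
  + by apply: not_swapped; split => //; rewrite -{1}e gvK.
  + exact: not_fixedS.
  + by apply: not_fixed; rewrite {2}e gv_ordS ord_predK.
- case: (short_pathP (s := ordS i) (t := gv i) wl ws we) => -[_ e].
  + by apply: not_swapped; split => //; rewrite -e gvK.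
  + by apply: not_fixedS; rewrite gv_ordS e ordSK.
  + by apply: not_fixed; apply: ordS_inj; rewrite e.
Qed.

Lemma sigma_reflection :
  [/\ forall j, gv j = j ->
        exists c cs : K,
          [/\ sigma (ord_pred j, false) = - cs *: arr (ord_pred j, false),
              sigma (ord_pred j, true) = - ((mu j)^-1 * mus (ord_pred j) * c) *: arr (j, false),
              sigma (j, false) = c *: arr (ord_pred j, true)
            & sigma (j, true) = cs *: arr (j, true)],
      forall k, gv k = ordS k -> gv (ordS k) = k ->
        exists c : K,
          [/\ sigma (k, false) = c *: vtx k,
              sigma (k, true) = (lam * mus k * c) *: vtx (ordS k)
            & c != 0 -> lam ^+ 2 * mu k * mus k = 1]
    & forall i, (forall j, gv j = j -> i <> ord_pred j /\ i <> j) ->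
        ~ (gv i = ordS i /\ gv (ordS i) = i) ->
        sigma (i, false) = 0 /\ sigma (i, true) = 0].
Proof.
by split; [exact: sigma_fixed_vertex | exact: sigma_swapped_edge | exact: sigma_elsewhere].
Qed.

End Reflection.

End QuiverTaftMap.

End PathModel.

Theorem lemma3p11 (K : fieldType) (r m : nat) (lam : K) (n d : nat)
  (G X : pathalg K n -> pathalg K n) (mu mus gam : 'I_n -> K) :
  (1 < r)%N -> (0 < m)%N -> (r %| m)%N -> r.-primitive_root lam -> (r%:R : K) != 0 ->
  (3 <= n)%N ->
  (* T acts linearly and inner faithfully on k Qbar *)
  taft_module_algebra r m lam G X ->
  taft_linear_action G X ->
  inner_faithful r m lam G X ->
  (* g acts by a reflection *)
  (0 < d)%N -> (d <= n.-1)%N ->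
  (forall i, mu i != 0) -> (forall i, mus i != 0) ->
  (forall i j : 'I_n, (j : nat) = refl_vtx n d i ->
     G (evtx K i) = evtx K j) ->
  (forall i j : 'I_n, (j : nat) = (((2 * n) - (d + i + 1)) %% n)%N ->
     G (earr K (i, false)) = mu i *: earr K (j, true) /\
     G (earr K (i, true)) = mus i *: earr K (j, false)) ->
  (* the scalars gamma_i : x . e_i = gamma_i e_i - gamma_i lam^-1 e_{g.i} *)
  (forall i j : 'I_n, (j : nat) = refl_vtx n d i ->
     X (evtx K i) = gam i *: evtx K i - (gam i * lam^-1) *: evtx K j) ->
  let sigma := quiver_taft lam gam G X in
  [/\ (* (1) *)
      (forall j : 'I_n, refl_vtx n d j = j ->
         exists c cs : K,
           [/\ sigma (ord_pred j, false) = - cs *: earr K (ord_pred j, false),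
               sigma (ord_pred j, true)
                 = - ((mu j)^-1 * mus (ord_pred j) * c) *: earr K (j, false),
               sigma (j, false) = c *: earr K (ord_pred j, true)
             & sigma (j, true) = cs *: earr K (j, true)]),
      (* (2) *)
      (forall k : 'I_n, refl_vtx n d k = ordS k -> refl_vtx n d (ordS k) = k ->
         exists c : K,
           [/\ sigma (k, false) = c *: evtx K k,
               sigma (k, true) = (lam * mus k * c) *: evtx K (ordS k)
             & c != 0 -> lam ^+ 2 * mu k * mus k = 1])
    & (* (3) *)
      (forall i : 'I_n,
         (forall j : 'I_n, refl_vtx n d j = j -> i <> ord_pred j /\ i <> j) ->
         ~ (refl_vtx n d i = ordS i /\ refl_vtx n d (ordS i) = i) ->
         sigma (i, false) = 0 /\ sigma (i, true) = 0)].
Proof.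
(* Of the Taft algebra only lam <> 0, 1 matters. *)
move=> r_gt1 _ _ lam_prim _ n_ge3 [G_lin X_lin GX _ [_ [G_mul _] X_mul _]] [_ G_len _ X_len] _.
move=> _ d_le mu_neq0 mus_neq0 G_evtx G_earr X_evtx sigma.
have d_lt_n : (d < n)%N by lia.
pose gv := refl_ord d_lt_n.
have toG (i j : 'I_n) : refl_vtx n d i = j -> gv i = j by move=> e; apply: val_inj.
have ofG (i j : 'I_n) : gv i = j -> refl_vtx n d i = j by move=> <-.
have lam_neq0 : lam != 0 by rewrite (prim_root_eq0 lam_prim) -lt0n ltnW.
have G_arr a : G (earr K a) = refl_coef mu mus a *: earr K (refl_arrow gv a).
  case: a => i b; have [Ga Ga'] := G_earr i _ (refl_ordS_val d_lt_n i).
  by case: b; [exact: Ga' | exact: Ga].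
have G_len' p w : (G << p >>)@_w != 0 -> plen w = plen p.
  by rewrite mcoeff_neq0; exact: G_len.
have X_len' a w : (X (earr K a))@_w != 0 -> (plen w <= 1)%N.
  by rewrite mcoeff_neq0; exact: X_len.
have [P1 P2 P3] := sigma_reflection (@mcoeff_is_scalar K n) (@mcoeff_path K n)
  (fun u v => (malgP u v).1) (@pmul_is_bilinear K n) (@mcoeff_pmul_evtxr K n)
  (@mcoeff_pmul_evtxl K n) lam_neq0 (prim_root_neq1 r_gt1 lam_prim) G_lin X_lin GX G_mul
  X_mul (refl_ordK d_lt_n) (fun i => G_evtx i (gv i) erefl) (fun i => X_evtx i (gv i) erefl)
  G_len' X_len' n_ge3 (refl_ordS d_lt_n) mu_neq0 mus_neq0 G_arr.
split.
- by move=> j /toG; exact: P1.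
- by move=> k /toG gk /toG gSk; exact: P2.
- move=> i not_near not_swapped; apply: P3 => [j /ofG | [/ofG gi /ofG gSi]].
    exact: not_near.
  exact: not_swapped.
Qed.
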